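(* A pseudovariety of semigroupoids $\mathsf V$ is equidivisible if and only if $\overline{\Omega}_A\mathsf V$ is equidivisible for every finite-vertex graph $A$.
   Context: A semigroupoid is a graph (vertices, edges, source/range maps $\alpha,\omega$) with associative partial multiplication $st$ defined iff $\alpha(s)=\omega(t)$; $S^I$ is $S$ with a local identity adjoined at each vertex. $S$ is equidivisible if whenever $uv=xy$ for edges $u,v,x,y$, there is $t\in E(S^I)$ with either ($ut=x$ and $v=ty$) or ($xt=u$ and $y=tv$). A pseudovariety of semigroupoids (class of finite semigroupoids closed under divisors, finite direct products, finite coproducts) $\mathsf V$ is equidivisible if the free pro-$\mathsf V$ semigroupoid $\overline{\Omega}_A\mathsf V$ is equidivisible for every finite graph $A$ (finitely many vertices and edges). Finite-vertex graphs may have infinitely many edges. *)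

From Stdlib Require Import List ProofIrrelevance.


Record graph := Graph {
  gV : Type;
  gE : Type;
  galpha : gE -> gV;
  gomega : gE -> gV
}.

Definition finite_type (T : Type) : Prop := exists l : list T, forall x, In x l.

Definition finite_graph (A : graph) : Prop := finite_type (gV A) /\ finite_type (gE A).
Definition finite_vertex_graph (A : graph) : Prop := finite_type (gV A).

(* The product [st] is defined iff alpha s = omega t; we make it a
   dependent function taking a proof of that equation. *)
Record sgd := Sgd {
  sV : Type;
  sE : Type;
  salpha : sE -> sV;
  somega : sE -> sV;
  smul : forall s t : sE, salpha s = somega t -> sE;
  smul_alpha : forall s t h, salpha (smul s t h) = salpha t;
  smul_omega : forall s t h, somega (smul s t h) = somega s;
  smul_assoc : forall s t u h1 h2 h3 h4,
      smul (smul s t h1) u h2 = smul s (smul t u h3) h4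
}.

Definition finite_sgd (S : sgd) : Prop := finite_type (sV S) /\ finite_type (sE S).

Record smor (S T : sgd) := Smor {
  mv : sV S -> sV T;
  me : sE S -> sE T;
  me_alpha : forall s, salpha T (me s) = mv (salpha S s);
  me_omega : forall s, somega T (me s) = mv (somega S s);
  me_mul : forall s t (h : salpha S s = somega S t)
                 (h' : salpha T (me s) = somega T (me t)),
      me (smul S s t h) = smul T (me s) (me t) h'
}.
Arguments mv {S T} _ _.
Arguments me {S T} _ _.
Arguments me_alpha {S T} _ _.
Arguments me_omega {S T} _ _.
Arguments me_mul {S T} _ _ _ _ _.

Record gmor (A : graph) (S : sgd) := Gmor {
  fv : gV A -> sV S;
  fe : gE A -> sE S;
  fe_alpha : forall a, salpha S (fe a) = fv (galpha A a);
  fe_omega : forall a, somega S (fe a) = fv (gomega A a)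
}.
Arguments fv {A S} _ _.
Arguments fe {A S} _ _.
Arguments fe_alpha {A S} _ _.
Arguments fe_omega {A S} _ _.

Definition gcomp {A : graph} {S T : sgd} (psi : smor S T) (phi : gmor A S) : gmor A T.
Proof.
  refine (Gmor A T (fun a => mv psi (fv phi a)) (fun a => me psi (fe phi a)) _ _).
  - intro a. rewrite me_alpha, fe_alpha. reflexivity.
  - intro a. rewrite me_omega, fe_omega. reflexivity.
Defined.

Definition bij {X Y : Type} (f : X -> Y) : Prop :=
  exists g : Y -> X, (forall x, g (f x) = x) /\ (forall y, f (g y) = y).

Definition rel_morphism {S T : sgd} (rv : sV S -> sV T -> Prop)
    (re : sE S -> sE T -> Prop) : Prop :=
  (forall v, exists v', rv v v') /\
  (forall s u' w', rv (salpha S s) u' -> rv (somega S s) w' ->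
      exists t, re s t /\ salpha T t = u' /\ somega T t = w') /\
  (forall s t, re s t -> rv (salpha S s) (salpha T t) /\ rv (somega S s) (somega T t)) /\
  (forall s s' t t' h h', re s t -> re s' t' -> re (smul S s s' h) (smul T t t' h')).

Definition division {S T : sgd} (rv : sV S -> sV T -> Prop)
    (re : sE S -> sE T -> Prop) : Prop :=
  rel_morphism rv re /\
  (forall v v' w, rv v w -> rv v' w -> v = v') /\
  (forall s s' t, salpha S s = salpha S s' -> somega S s = somega S s' ->
      re s t -> re s' t -> s = s').

Definition divides (S T : sgd) : Prop := exists rv re, division (S:=S) (T:=T) rv re.

Definition is_product (P S T : sgd) : Prop :=
  exists (p1 : smor P S) (p2 : smor P T),
    bij (fun v => (mv p1 v, mv p2 v)) /\ bij (fun e => (me p1 e, me p2 e)).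

Definition is_coproduct (P S T : sgd) : Prop :=
  exists (i1 : smor S P) (i2 : smor T P),
    bij (fun v : sV S + sV T => match v with inl x => mv i1 x | inr y => mv i2 y end) /\
    bij (fun e : sE S + sE T => match e with inl x => me i1 x | inr y => me i2 y end).

(* empty direct product: the trivial semigroupoid (one vertex, one edge) *)
Definition is_trivial (P : sgd) : Prop :=
  (exists v : sV P, forall w, w = v) /\ (exists e : sE P, forall f, f = e).

(* empty coproduct: the empty semigroupoid *)
Definition is_empty_sgd (P : sgd) : Prop := (sV P -> False) /\ (sE P -> False).

Definition pseudovariety (V : sgd -> Prop) : Prop :=
  (forall S, V S -> finite_sgd S) /\
  (forall S T, V T -> finite_sgd S -> divides S T -> V S) /\
  (forall P, is_trivial P -> V P) /\
  (forall P S T, V S -> V T -> is_product P S T -> V P) /\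
  (forall P, is_empty_sgd P -> V P) /\
  (forall P S T, V S -> V T -> is_coproduct P S T -> V P).

(* Elements of E(S^I): edges of S, or local identities 1_w at vertices w. *)
Section Equidiv.
Variables (Vt Et : Type) (alpha omega : Et -> Vt)
          (mul : forall s t : Et, alpha s = omega t -> Et).

Definition prodI (a b c : Et + Vt) : Prop :=
  match a, b with
  | inl s, inl t => exists h : alpha s = omega t, c = inl (mul s t h)
  | inl s, inr w => alpha s = w /\ c = inl s
  | inr w, inl t => omega t = w /\ c = inl t
  | inr w, inr w' => w = w' /\ c = inr w
  end.

Definition equidivisible_str : Prop :=
  forall (u v x y : Et) (h1 : alpha u = omega v) (h2 : alpha x = omega y),
    mul u v h1 = mul x y h2 ->
    exists t : Et + Vt,
      (prodI (inl u) t (inl x) /\ prodI t (inl y) (inl v)) \/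
      (prodI (inl x) t (inl u) /\ prodI t (inl v) (inl y)).
End Equidiv.

Definition sgd_equidivisible (S : sgd) : Prop :=
  equidivisible_str (sV S) (sE S) (salpha S) (somega S) (smul S).

(* Realised as the projective limit of all finite semigroupoids S in V
   equipped with a graph morphism A -> S: an element is a family indexed by
   such pairs (S, phi), natural with respect to all semigroupoid morphisms
   S -> T commuting with the maps from A. *)
Section FreeProV.
Variables (V : sgd -> Prop) (A : graph).

Record OmV := MkOmV {
  ov : forall {S : sgd}, V S -> gmor A S -> sV S;
  ov_nat : forall (S : sgd) (HS : V S) (T : sgd) (HT : V T) (phi : gmor A S) (psi : smor S T),
      mv psi (ov HS phi) = ov HT (gcomp psi phi)
}.

Record OmE := MkOmE {
  oe : forall {S : sgd}, V S -> gmor A S -> sE S;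
  oe_nat : forall (S : sgd) (HS : V S) (T : sgd) (HT : V T) (phi : gmor A S) (psi : smor S T),
      me psi (oe HS phi) = oe HT (gcomp psi phi)
}.

Definition Oalpha (x : OmE) : OmV.
Proof.
  refine (MkOmV (fun S HS phi => salpha S (oe x HS phi)) _).
  intros S HS T HT phi psi. rewrite <- (me_alpha psi), (oe_nat x S HS T HT). reflexivity.
Defined.

Definition Oomega (x : OmE) : OmV.
Proof.
  refine (MkOmV (fun S HS phi => somega S (oe x HS phi)) _).
  intros S HS T HT phi psi. rewrite <- (me_omega psi), (oe_nat x S HS T HT). reflexivity.
Defined.

Lemma smul_congr (S : sgd) s s' t t' h h' :
  s = s' -> t = t' -> smul S s t h = smul S s' t' h'.
Proof. intros -> ->. f_equal. apply proof_irrelevance. Qed.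

Definition Omul (x y : OmE) (h : Oalpha x = Oomega y) : OmE.
Proof.
  refine (MkOmE (fun S HS phi =>
            smul S (oe x HS phi) (oe y HS phi)
                 (f_equal (fun o => ov o HS phi) h)) _).
  intros S HS T HT phi psi.
  assert (h' : salpha T (me psi (oe x HS phi)) = somega T (me psi (oe y HS phi))).
  { rewrite me_alpha, me_omega. exact (f_equal (mv psi) (f_equal (fun o => ov o HS phi) h)). }
  rewrite (me_mul psi _ _ _ h').
  apply smul_congr; apply oe_nat.
Defined.

Definition free_proV_equidivisible : Prop :=
  equidivisible_str OmV OmE Oalpha Oomega Omul.
End FreeProV.

Definition pv_equidivisible (V : sgd -> Prop) : Prop :=
  forall A : graph, finite_graph A -> free_proV_equidivisible V A.

From Stdlib Require Import List ProofIrrelevance ClassicalEpsilon Classical FunctionalExtensionality.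
From mathcomp Require all_boot classical_sets filter.

(* Only the forward implication has content, and the argument works for any
   graph A, finite or not.  Suppose uv = xy in the pro-V semigroupoid over A.
   Project it to each A-generated subsemigroupoid P_j of a finite
   semigroupoid S_j in V: P_j is in V and its underlying graph is finite, so
   equidivisibility over that finite graph yields a witness in P_j.  Choose an
   ultrafilter on the directed system of the S_j.  Almost everywhere the
   witnesses have the same shape (edge on the left, edge on the right, or local
   identity), and in every finite coordinate S_i their images take almost
   everywhere a single value.  Morphisms over A out of P_j are unique, so these
   limit values form a compatible family, i.e. an element of the pro-V
   semigroupoid, and it witnesses equidivisibility of uv = xy. *)

Record ultrafilter {T : Type} (U : (T -> Prop) -> Prop) : Prop := {
  uf_and : forall X Y, U X -> U Y -> U (fun t => X t /\ Y t);
  uf_mono : forall X Y : T -> Prop, (forall t, X t -> Y t) -> U X -> U Y;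
  uf_inhabited : forall X, U X -> exists t, X t;
  uf_or_compl : forall X, U X \/ U (fun t => ~ X t)
}.

Module UltrafilterLemma.
Import all_boot classical_sets filter.

Lemma ultrafilter_of_directed_base (I T : Type) (B : I -> T -> Prop) (i0 : I) :
  (forall i, exists t, B i t) ->
  (forall i1 i2, exists k, forall t, B k t -> B i1 t /\ B i2 t) ->
  exists U : (T -> Prop) -> Prop, ultrafilter U /\ forall i, U (B i).
Proof.
move=> Bne Bdir.
pose F : set_system T := fun X => exists i, forall t, B i t -> X t.
have FF : ProperFilter F.
  apply: Build_ProperFilter_ex.
    by move=> X [i BX]; have [t Bt] := Bne i; exists t; apply: BX.
  split.
  - by exists i0.
  - move=> X Y [i1 H1] [i2 H2]; have [k Hk] := Bdir i1 i2.
    by exists k => t /Hk [/H1 ? /H2 ?].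
  - by move=> X Y XY [i H]; exists i => t /H /XY.
have [G [GU FG]] := ultraFilterLemma FF.
exists G; split; last by move=> i; apply: FG; exists i.
split.
- by move=> X Y GX GY; exact: (filterI GX GY).
- by move=> X Y XY GX; exact: (filterS XY GX).
- by move=> X /filter_ex [t Xt]; exists t.
- by move=> X; exact: (in_ultra_setVsetC X GU).
Qed.
End UltrafilterLemma.

Section Ultrafilter.
Variables (T : Type) (U : (T -> Prop) -> Prop).
Hypothesis HU : ultrafilter U.

Lemma uf_split (X Y Z : T -> Prop) :
  U X -> (forall t, X t -> Y t \/ Z t) -> U Y \/ U Z.
Proof.
  intros HX HYZ. destruct (uf_or_compl _ HU Y) as [HY|HnY]; [now left|right].
  apply (uf_mono _ HU (fun t => X t /\ ~ Y t)); [|now apply uf_and].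
  intros t [Xt nYt]. destruct (HYZ t Xt); tauto.
Qed.

Lemma uf_pigeonhole (Y : Type) (l : list Y) (R : T -> Y -> Prop) :
  (forall y, In y l) -> U (fun t => exists y, R t y) -> exists y, U (fun t => R t y).
Proof.
  intros Hl HR.
  assert (Hin : U (fun t => exists y, In y l /\ R t y)).
  { apply (uf_mono _ HU _ _) with (2 := HR). intros t [y Ry]. eauto. }
  clear HR Hl. induction l as [|a l IH].
  - destruct (uf_inhabited _ HU _ Hin) as [t [y [[] _]]].
  - destruct (uf_split _ (fun t => R t a) (fun t => exists y, In y l /\ R t y) Hin)
      as [Ha|Hl]; [|now exists a|now apply IH].
    intros t [y [[<-|Hy] Ry]]; eauto.
Qed.

Lemma uf_choice (F : T -> Type) (P : forall t, F t -> Prop) :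
  (forall t, inhabited (F t)) -> U (fun t => exists e, P t e) ->
  exists E : forall t, F t, U (fun t => P t (E t)).
Proof.
  intros inh HP. exists (fun t => epsilon (inh t) (P t)).
  apply (uf_mono _ HU _ _) with (2 := HP). intros t. apply epsilon_spec.
Qed.

End Ultrafilter.

Definition mul_eq {Vt Et : Type} {alpha omega : Et -> Vt}
    (mul : forall s t : Et, alpha s = omega t -> Et) (a b c : Et) : Prop :=
  exists h, mul a b h = c.

(* The three shapes a witness of [uv = xy] can take in [S^I]: an edge on
   either side, or a local identity (which forces [u = x] and [v = y]). *)
Definition equidiv_cases {Vt Et : Type} {alpha omega : Et -> Vt}
    (mul : forall s t : Et, alpha s = omega t -> Et) (u v x y : Et) : Prop :=
  (exists t, mul_eq mul u t x /\ mul_eq mul t y v) \/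
  (exists t, mul_eq mul x t u /\ mul_eq mul t v y) \/
  (x = u /\ v = y).

Lemma equidivisible_str_cases {Vt Et : Type} {alpha omega : Et -> Vt}
    (mul : forall s t : Et, alpha s = omega t -> Et) :
  equidivisible_str Vt Et alpha omega mul <->
  (forall u v x y (h1 : alpha u = omega v) (h2 : alpha x = omega y),
     mul u v h1 = mul x y h2 -> equidiv_cases mul u v x y).
Proof.
  split; intros H u v x y h1 h2 E; specialize (H u v x y h1 h2 E).
  - destruct H as [[t|w] [[H1 H2]|[H1 H2]]]; simpl in H1, H2.
    + destruct H1 as [k1 H1], H2 as [k2 H2].
      left. exists t. split; [exists k1|exists k2]; congruence.
    + destruct H1 as [k1 H1], H2 as [k2 H2].
      right; left. exists t. split; [exists k1|exists k2]; congruence.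
    + right; right. split; apply proj2 in H1, H2; congruence.
    + right; right. split; apply proj2 in H1, H2; congruence.
  - destruct H as [[t [[k1 H1] [k2 H2]]]|[[t [[k1 H1] [k2 H2]]]|[-> ->]]].
    + exists (inl t). left. split; [exists k1|exists k2]; simpl; congruence.
    + exists (inl t). right. split; [exists k1|exists k2]; simpl; congruence.
    + exists (inr (alpha u)). left. simpl. auto.
Qed.

Lemma gmor_ext (A : graph) (S : sgd) (f g : gmor A S) :
  (forall a, fv f a = fv g a) -> (forall a, fe f a = fe g a) -> f = g.
Proof.
  destruct f as [v1 e1 a1 o1], g as [v2 e2 a2 o2]; simpl; intros Hv He.
  assert (v1 = v2) by (apply functional_extensionality; auto).
  assert (e1 = e2) by (apply functional_extensionality; auto).
  subst. f_equal; apply proof_irrelevance.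
Qed.

Definition scomp {R S T : sgd} (psi : smor S T) (rho : smor R S) : smor R T.
Proof.
  refine (Smor R T (fun v => mv psi (mv rho v)) (fun e => me psi (me rho e)) _ _ _).
  - intro s. rewrite !me_alpha. reflexivity.
  - intro s. rewrite !me_omega. reflexivity.
  - intros s t h h'.
    assert (h2 : salpha S (me rho s) = somega S (me rho t)).
    { rewrite me_alpha, me_omega, h. reflexivity. }
    rewrite (me_mul rho s t h h2). apply me_mul.
Defined.

Definition sid (S : sgd) : smor S S.
Proof.
  refine (Smor S S (fun v => v) (fun e => e) (fun _ => eq_refl) (fun _ => eq_refl) _).
  intros. apply smul_congr; reflexivity.
Defined.

Lemma mul_eq_smor {S T : sgd} (psi : smor S T) (a b c : sE S) :
  mul_eq (smul S) a b c -> mul_eq (smul T) (me psi a) (me psi b) (me psi c).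
Proof.
  intros [h <-].
  assert (h' : salpha T (me psi a) = somega T (me psi b)).
  { rewrite me_alpha, me_omega, h. reflexivity. }
  exists h'. symmetry. apply me_mul.
Qed.

Definition sgraph (S : sgd) : graph := Graph (sV S) (sE S) (salpha S) (somega S).

Definition sgraph_id (S : sgd) : gmor (sgraph S) S :=
  Gmor (sgraph S) S (fun v => v) (fun e => e) (fun _ => eq_refl) (fun _ => eq_refl).

Definition sunit : sgd.
Proof.
  refine (Sgd unit unit (fun _ => tt) (fun _ => tt) (fun _ _ _ => tt) _ _ _);
    intros; reflexivity.
Defined.

Lemma sunit_trivial : is_trivial sunit.
Proof. split; exists tt; intros []; reflexivity. Qed.

Definition sprod (S T : sgd) : sgd.
Proof.
  refine (Sgd (sV S * sV T) (sE S * sE T)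
    (fun e => (salpha S (fst e), salpha T (snd e)))
    (fun e => (somega S (fst e), somega T (snd e)))
    (fun s t h => (smul S (fst s) (fst t) (f_equal fst h),
                   smul T (snd s) (snd t) (f_equal snd h)))
    _ _ _).
  - intros; simpl. rewrite !smul_alpha. reflexivity.
  - intros; simpl. rewrite !smul_omega. reflexivity.
  - intros; simpl. f_equal; apply smul_assoc.
Defined.

Definition sfst (S T : sgd) : smor (sprod S T) S.
Proof.
  refine (Smor (sprod S T) S fst fst (fun _ => eq_refl) (fun _ => eq_refl) _).
  intros. apply smul_congr; reflexivity.
Defined.

Definition ssnd (S T : sgd) : smor (sprod S T) T.
Proof.
  refine (Smor (sprod S T) T snd snd (fun _ => eq_refl) (fun _ => eq_refl) _).
  intros. apply smul_congr; reflexivity.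
Defined.

Lemma sprod_product (S T : sgd) : is_product (sprod S T) S T.
Proof.
  exists (sfst S T), (ssnd S T).
  split; exists (fun p => p); split; intros [a b]; reflexivity.
Qed.

Lemma finite_type_sig (X : Type) (P : X -> Prop) :
  finite_type X -> finite_type {x | P x}.
Proof.
  intros [l Hl].
  enough (H : exists l', forall x : {x | P x}, In (proj1_sig x) l -> In x l').
  { destruct H as [l' Hl']. exists l'. intro x. apply Hl', Hl. }
  clear Hl. induction l as [|a l [l' IH]].
  - exists nil. intros x [].
  - destruct (classic (P a)) as [Pa|nPa].
    + exists (exist P a Pa :: l'). intros [x Px] Hx. simpl in Hx. destruct Hx as [<-|Hx].
      * left. apply subset_eq_compat. reflexivity.
      * right. apply IH. exact Hx.
    + exists l'. intros [x Px] Hx. simpl in Hx. destruct Hx as [<-|Hx]; [contradiction|].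
      apply IH. exact Hx.
Qed.

Section Generated.
Variables (A : graph) (S : sgd) (phi : gmor A S).

Inductive generated : sE S -> Prop :=
| generated_base : forall a, generated (fe phi a)
| generated_mul : forall s t h, generated s -> generated t -> generated (smul S s t h).

Definition sgen : sgd.
Proof.
  refine (Sgd (sV S) {e | generated e}
    (fun e => salpha S (proj1_sig e)) (fun e => somega S (proj1_sig e))
    (fun s t h => exist _ (smul S (proj1_sig s) (proj1_sig t) h)
                   (generated_mul _ _ h (proj2_sig s) (proj2_sig t))) _ _ _).
  - intros; simpl. apply smul_alpha.
  - intros; simpl. apply smul_omega.
  - intros; apply subset_eq_compat. apply smul_assoc.
Defined.

Definition sgen_incl : smor sgen S.
Proof.
  refine (Smor sgen S (fun v => v) (@proj1_sig _ _) (fun _ => eq_refl) (fun _ => eq_refl) _).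
  intros. apply smul_congr; reflexivity.
Defined.

Definition sgen_gmor : gmor A sgen.
Proof.
  refine (Gmor A sgen (fv phi) (fun a => exist _ (fe phi a) (generated_base a)) _ _).
  - intro a. apply (fe_alpha phi).
  - intro a. apply (fe_omega phi).
Defined.

Lemma sgen_incl_gmor : gcomp sgen_incl sgen_gmor = phi.
Proof. apply gmor_ext; reflexivity. Qed.

Lemma sgen_finite : finite_sgd S -> finite_sgd sgen.
Proof. intros [HV HE]. split; [exact HV|]. apply finite_type_sig, HE. Qed.

Lemma sgen_divides : divides sgen S.
Proof.
  exists (fun v w => v = w), (fun s t => proj1_sig s = t).
  split; [split; [|split; [|split]]|split].
  - intro v. exists v. reflexivity.
  - intros s u' w' H1 H2. exists (proj1_sig s). simpl in *. auto.
  - intros s t <-. simpl. auto.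
  - intros s s' t t' h h' <- <-. simpl. apply smul_congr; reflexivity.
  - intros v v' w -> ->. reflexivity.
  - intros s s' t _ _ H1 H2. destruct s, s'; simpl in *. subst.
    apply subset_eq_compat. reflexivity.
Qed.

Lemma smor_generated_unique (T : sgd) (psi chi : smor S T) :
  (forall a, me psi (fe phi a) = me chi (fe phi a)) ->
  forall e, generated e -> me psi e = me chi e.
Proof.
  intros Hgen e He. induction He as [a|s t h Hs IHs Ht IHt]; [apply Hgen|].
  assert (k1 : salpha T (me psi s) = somega T (me psi t))
    by (rewrite me_alpha, me_omega, h; reflexivity).
  assert (k2 : salpha T (me chi s) = somega T (me chi t))
    by (rewrite me_alpha, me_omega, h; reflexivity).
  rewrite (me_mul psi s t h k1), (me_mul chi s t h k2).
  apply smul_congr; auto.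
Qed.

End Generated.

Section FreeProV.
Variables (V : sgd -> Prop) (A : graph).

Lemma OmE_ext (x y : OmE V A) :
  (forall S (HS : V S) phi, oe V A x HS phi = oe V A y HS phi) -> x = y.
Proof.
  destruct x as [f1 n1], y as [f2 n2]; simpl; intros H.
  assert (f1 = f2).
  { apply functional_extensionality_dep; intro S.
    apply functional_extensionality_dep; intro HS.
    apply functional_extensionality; intro phi. apply H. }
  subst. f_equal; apply proof_irrelevance.
Qed.

Lemma OmV_ext (x y : OmV V A) :
  (forall S (HS : V S) phi, ov V A x HS phi = ov V A y HS phi) -> x = y.
Proof.
  destruct x as [f1 n1], y as [f2 n2]; simpl; intros H.
  assert (f1 = f2).
  { apply functional_extensionality_dep; intro S.
    apply functional_extensionality_dep; intro HS.
    apply functional_extensionality; intro phi. apply H. }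
  subst. f_equal; apply proof_irrelevance.
Qed.

Lemma mul_eq_Omul_pointwise (a b c : OmE V A) :
  (forall S (HS : V S) phi,
     mul_eq (smul S) (oe V A a HS phi) (oe V A b HS phi) (oe V A c HS phi)) ->
  mul_eq (Omul V A) a b c.
Proof.
  intros H.
  assert (h : Oalpha V A a = Oomega V A b).
  { apply OmV_ext. intros S HS phi. destruct (H S HS phi) as [h _]. exact h. }
  exists h. apply OmE_ext. intros S HS phi.
  destruct (H S HS phi) as [k <-]. apply smul_congr; reflexivity.
Qed.

Lemma mul_eq_Omul_eval (S : sgd) (HS : V S) (phi : gmor A S) (a b c : OmE V A) :
  mul_eq (Omul V A) a b c ->
  mul_eq (smul S) (oe V A a HS phi) (oe V A b HS phi) (oe V A c HS phi).
Proof.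
  intros [h <-]. exists (f_equal (fun o => ov V A o HS phi) h). reflexivity.
Qed.

Lemma equidiv_cases_eval (S : sgd) (HS : V S) (phi : gmor A S) (u v x y : OmE V A) :
  equidiv_cases (Omul V A) u v x y ->
  equidiv_cases (smul S) (oe V A u HS phi) (oe V A v HS phi)
                         (oe V A x HS phi) (oe V A y HS phi).
Proof.
  intros [[t [Hl Hr]]|[[t [Hl Hr]]|[-> ->]]].
  - left. exists (oe V A t HS phi). split; apply mul_eq_Omul_eval; assumption.
  - right; left. exists (oe V A t HS phi). split; apply mul_eq_Omul_eval; assumption.
  - right; right. split; reflexivity.
Qed.

End FreeProV.

Section Pushforward.
Variables (V : sgd -> Prop) (A : graph) (P : sgd) (f : gmor A P).

Definition gmor_precomp {T : sgd} (chi : gmor (sgraph P) T) : gmor A T.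
Proof.
  refine (Gmor A T (fun a => fv chi (fv f a)) (fun a => fe chi (fe f a)) _ _).
  - intro a. rewrite (fe_alpha chi). simpl. rewrite (fe_alpha f). reflexivity.
  - intro a. rewrite (fe_omega chi). simpl. rewrite (fe_omega f). reflexivity.
Defined.

Definition pushE (z : OmE V A) : OmE V (sgraph P).
Proof.
  refine (MkOmE V (sgraph P) (fun T HT chi => oe V A z HT (gmor_precomp chi)) _).
  intros S HS T HT chi psi. rewrite (oe_nat V A z S HS T HT).
  f_equal. apply gmor_ext; reflexivity.
Defined.

Lemma pushE_composable (u v : OmE V A) :
  Oalpha V A u = Oomega V A v ->
  Oalpha V (sgraph P) (pushE u) = Oomega V (sgraph P) (pushE v).
Proof.
  intro h. apply OmV_ext. intros T HT chi.
  exact (f_equal (fun o => ov V A o HT (gmor_precomp chi)) h).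
Qed.

Lemma pushE_mul (u v : OmE V A) h h' :
  pushE (Omul V A u v h) = Omul V (sgraph P) (pushE u) (pushE v) h'.
Proof. apply OmE_ext. intros T HT chi. apply smul_congr; reflexivity. Qed.

Lemma pushE_eval (HP : V P) (z : OmE V A) :
  oe V (sgraph P) (pushE z) HP (sgraph_id P) = oe V A z HP f.
Proof. simpl. f_equal. apply gmor_ext; reflexivity. Qed.

End Pushforward.

Section Limit.
Variable V : sgd -> Prop.
Hypothesis HV : pseudovariety V.
Variable A : graph.

Lemma V_finite (S : sgd) : V S -> finite_sgd S.
Proof. apply HV. Qed.

Lemma V_sgen (S : sgd) (phi : gmor A S) : V S -> V (sgen A S phi).
Proof.
  intro HS. destruct HV as [_ [Hdiv _]]. apply (Hdiv _ S HS).
  - apply sgen_finite, V_finite, HS.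
  - apply sgen_divides.
Qed.

Lemma V_sprod (S T : sgd) : V S -> V T -> V (sprod S T).
Proof.
  intros HS HT. destruct HV as [_ [_ [_ [Hprod _]]]].
  apply (Hprod _ S T HS HT), sprod_product.
Qed.

Lemma V_sunit : V sunit.
Proof. destruct HV as [_ [_ [Htriv _]]]. apply Htriv, sunit_trivial. Qed.

Record index := Index { iS : sgd; iH : V iS; iphi : gmor A iS }.

Definition mor_over (j i : index) (psi : smor (iS j) (iS i)) : Prop :=
  gcomp psi (iphi j) = iphi i.

Definition above (i j : index) : Prop := exists psi, mor_over j i psi.

Lemma mor_over_comp (j k i : index) psi chi :
  mor_over j k psi -> mor_over k i chi -> mor_over j i (scomp chi psi).
Proof.
  unfold mor_over. intros Hpsi Hchi. rewrite <- Hchi, <- Hpsi. apply gmor_ext; reflexivity.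
Qed.

Definition gunit : gmor A sunit :=
  Gmor A sunit (fun _ => tt) (fun _ => tt) (fun _ => eq_refl) (fun _ => eq_refl).

Definition gpair {S T : sgd} (f : gmor A S) (g : gmor A T) : gmor A (sprod S T).
Proof.
  refine (Gmor A (sprod S T) (fun a => (fv f a, fv g a)) (fun a => (fe f a, fe g a)) _ _).
  - intro a; simpl. rewrite !fe_alpha. reflexivity.
  - intro a; simpl. rewrite !fe_omega. reflexivity.
Defined.

Definition index_unit : index := Index sunit V_sunit gunit.

Definition index_prod (i1 i2 : index) : index :=
  Index (sprod (iS i1) (iS i2)) (V_sprod _ _ (iH i1) (iH i2)) (gpair (iphi i1) (iphi i2)).

Lemma exists_ultrafilter_above :
  exists U : (index -> Prop) -> Prop, ultrafilter U /\ forall i, U (above i).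
Proof.
  apply (UltrafilterLemma.ultrafilter_of_directed_base index index above index_unit).
  - intro i. exists i, (sid _). apply gmor_ext; reflexivity.
  - intros i1 i2. exists (index_prod i1 i2). intros j [psi Hpsi]. split.
    + exists (scomp (sfst _ _) psi). apply (mor_over_comp _ (index_prod i1 i2)); auto.
      apply gmor_ext; reflexivity.
    + exists (scomp (ssnd _ _) psi). apply (mor_over_comp _ (index_prod i1 i2)); auto.
      apply gmor_ext; reflexivity.
Qed.

Lemma OmE_ext_index (x y : OmE V A) :
  (forall i, oe V A x (iH i) (iphi i) = oe V A y (iH i) (iphi i)) -> x = y.
Proof. intro H. apply OmE_ext. intros S HS phi. exact (H (Index S HS phi)). Qed.

Lemma mul_eq_Omul_index (a b c : OmE V A) :
  (forall i, mul_eq (smul (iS i)) (oe V A a (iH i) (iphi i)) (oe V A b (iH i) (iphi i))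
                                  (oe V A c (iH i) (iphi i))) ->
  mul_eq (Omul V A) a b c.
Proof.
  intro H. apply mul_eq_Omul_pointwise. intros S HS phi. exact (H (Index S HS phi)).
Qed.

Lemma oe_over (z : OmE V A) (j i : index) psi :
  mor_over j i psi -> me psi (oe V A z (iH j) (iphi j)) = oe V A z (iH i) (iphi i).
Proof. intro Hpsi. rewrite (oe_nat V A z _ (iH j) _ (iH i)), Hpsi. reflexivity. Qed.

(* The A-generated part of [iS j]: it lies in [V] and has a finite underlying
   graph, and morphisms over [A] out of it are unique. *)
Definition gen (j : index) : sgd := sgen A (iS j) (iphi j).

Definition restrict (z : OmE V A) (j : index) : sE (gen j) :=
  oe V A z (V_sgen (iS j) (iphi j) (iH j)) (sgen_gmor A (iS j) (iphi j)).

Lemma restrict_over (z : OmE V A) (j i : index) psi :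
  mor_over j i psi -> me psi (proj1_sig (restrict z j)) = oe V A z (iH i) (iphi i).
Proof.
  intro Hpsi. rewrite <- (oe_over z j i psi Hpsi). f_equal.
  change (proj1_sig (restrict z j)) with (me (sgen_incl A (iS j) (iphi j)) (restrict z j)).
  unfold restrict. rewrite (oe_nat V A z _ _ _ (iH j)), sgen_incl_gmor. reflexivity.
Qed.

Lemma mor_over_unique (j i : index) psi chi :
  mor_over j i psi -> mor_over j i chi ->
  forall e : sE (gen j), me psi (proj1_sig e) = me chi (proj1_sig e).
Proof.
  intros Hpsi Hchi e. apply (smor_generated_unique A _ (iphi j)); [|apply proj2_sig].
  intro a. change (fe (gcomp psi (iphi j)) a = fe (gcomp chi (iphi j)) a).
  rewrite Hpsi, Hchi. reflexivity.
Qed.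

Section Ultralimit.
Variable U : (index -> Prop) -> Prop.
Hypothesis HU : ultrafilter U.
Hypothesis U_above : forall i, U (above i).

Lemma U_over (P : index -> Prop) :
  U P -> forall i, exists j psi, P j /\ mor_over j i psi.
Proof.
  intros HP i.
  destruct (uf_inhabited _ HU _ (uf_and _ HU _ _ HP (U_above i))) as [j [Pj [psi Hpsi]]].
  eauto.
Qed.

Lemma restrict_limit_eq (a b : OmE V A) :
  U (fun j => restrict a j = restrict b j) -> a = b.
Proof.
  intro H. apply OmE_ext_index. intro i.
  destruct (U_over _ H i) as [j [psi [Hab Hpsi]]].
  rewrite <- (restrict_over a j i psi Hpsi), <- (restrict_over b j i psi Hpsi), Hab.
  reflexivity.
Qed.

Section Family.
Variable E : forall j, sE (gen j).

Definition image_at (i j : index) (s : sE (iS i)) : Prop :=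
  exists psi, mor_over j i psi /\ me psi (proj1_sig (E j)) = s.

Lemma limit_value_ex (i : index) : exists s, U (fun j => image_at i j s).
Proof.
  destruct (V_finite _ (iH i)) as [_ [l Hl]].
  apply (uf_pigeonhole _ _ HU _ l); [exact Hl|].
  apply (uf_mono _ HU _ _) with (2 := U_above i).
  intros j [psi Hpsi]. exists (me psi (proj1_sig (E j))), psi. auto.
Qed.

Definition limit_value (i : index) : sE (iS i) :=
  proj1_sig (constructive_indefinite_description _ (limit_value_ex i)).

Lemma limit_value_spec (i : index) : U (fun j => image_at i j (limit_value i)).
Proof. apply (proj2_sig (constructive_indefinite_description _ (limit_value_ex i))). Qed.

Lemma limit_value_nat (S : sgd) (HS : V S) (T : sgd) (HT : V T) phi (psi : smor S T) :
  me psi (limit_value (Index S HS phi)) = limit_value (Index T HT (gcomp psi phi)).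
Proof.
  destruct (uf_inhabited _ HU _ (uf_and _ HU _ _ (limit_value_spec (Index S HS phi))
                                  (limit_value_spec (Index T HT (gcomp psi phi)))))
    as [j [[p1 [H1 <-]] [p2 [H2 <-]]]].
  apply (mor_over_unique j (Index T HT (gcomp psi phi)) (scomp psi p1)); [|exact H2].
  apply (mor_over_comp _ (Index S HS phi)); [exact H1|reflexivity].
Qed.

Definition ulim : OmE V A :=
  MkOmE V A (fun S HS phi => limit_value (Index S HS phi)) limit_value_nat.

Lemma ulim_over (P : index -> Prop) :
  U P -> forall i, exists j psi, P j /\ mor_over j i psi /\
                   me psi (proj1_sig (E j)) = oe V A ulim (iH i) (iphi i).
Proof.
  intros HP [S HS phi].
  destruct (uf_inhabited _ HU _ (uf_and _ HU _ _ HP (limit_value_spec (Index S HS phi))))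
    as [j [Pj [psi [Hpsi Hval]]]].
  exists j, psi. auto.
Qed.

Lemma ulim_mul_left (a c : OmE V A) :
  U (fun j => mul_eq (smul (gen j)) (restrict a j) (E j) (restrict c j)) ->
  mul_eq (Omul V A) a ulim c.
Proof.
  intro H. apply mul_eq_Omul_index. intro i.
  destruct (ulim_over _ H i) as [j [psi [Hmul [Hpsi <-]]]].
  rewrite <- (restrict_over a j i psi Hpsi), <- (restrict_over c j i psi Hpsi).
  apply (mul_eq_smor psi), (mul_eq_smor (sgen_incl A (iS j) (iphi j))), Hmul.
Qed.

Lemma ulim_mul_right (b c : OmE V A) :
  U (fun j => mul_eq (smul (gen j)) (E j) (restrict b j) (restrict c j)) ->
  mul_eq (Omul V A) ulim b c.
Proof.
  intro H. apply mul_eq_Omul_index. intro i.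
  destruct (ulim_over _ H i) as [j [psi [Hmul [Hpsi <-]]]].
  rewrite <- (restrict_over b j i psi Hpsi), <- (restrict_over c j i psi Hpsi).
  apply (mul_eq_smor psi), (mul_eq_smor (sgen_incl A (iS j) (iphi j))), Hmul.
Qed.

End Family.

Lemma limit_factorization (a b c d : OmE V A) :
  U (fun j => exists e, mul_eq (smul (gen j)) (restrict a j) e (restrict c j) /\
                        mul_eq (smul (gen j)) e (restrict d j) (restrict b j)) ->
  exists t, mul_eq (Omul V A) a t c /\ mul_eq (Omul V A) t d b.
Proof.
  intro H.
  destruct (uf_choice _ _ HU (fun j => sE (gen j)) _ (fun j => inhabits (restrict a j)) H)
    as [E HE].
  exists (ulim E). split; [apply ulim_mul_left|apply ulim_mul_right];
    apply (uf_mono _ HU _ _) with (2 := HE); intros j [Hl Hr]; assumption.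
Qed.

End Ultralimit.

Hypothesis HEq : pv_equidivisible V.

Lemma equidiv_cases_restrict (u v x y : OmE V A) h1 h2 :
  Omul V A u v h1 = Omul V A x y h2 ->
  forall j, equidiv_cases (smul (gen j)) (restrict u j) (restrict v j)
                                         (restrict x j) (restrict y j).
Proof.
  intros Heq j.
  set (HP := V_sgen (iS j) (iphi j) (iH j)). set (f := sgen_gmor A (iS j) (iphi j)).
  pose proof (pushE_composable V A _ f u v h1) as k1.
  pose proof (pushE_composable V A _ f x y h2) as k2.
  assert (Heq' : Omul V _ (pushE V A _ f u) (pushE V A _ f v) k1 =
                 Omul V _ (pushE V A _ f x) (pushE V A _ f y) k2).
  { rewrite <- (pushE_mul V A _ f u v h1), <- (pushE_mul V A _ f x y h2), Heq. reflexivity. }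
  assert (Hfin : finite_graph (sgraph (gen j))) by exact (V_finite _ HP).
  pose proof (proj1 (equidivisible_str_cases _) (HEq _ Hfin) _ _ _ _ k1 k2 Heq') as Hc.
  pose proof (equidiv_cases_eval V _ _ HP (sgraph_id _) _ _ _ _ Hc) as Hc'.
  rewrite !pushE_eval in Hc'. exact Hc'.
Qed.

Theorem free_proV_equidivisible_of_pv : free_proV_equidivisible V A.
Proof.
  apply equidivisible_str_cases. intros u v x y h1 h2 Heq.
  destruct exists_ultrafilter_above as [U [HU U_above]].
  assert (Hcases := uf_mono _ HU _ _ (fun j _ => equidiv_cases_restrict u v x y h1 h2 Heq j)
                      (U_above index_unit)).
  destruct (uf_split _ _ HU _ _ _ Hcases (fun j H => H)) as [Hl|Hrest].
  - left. exact (limit_factorization U HU U_above _ _ _ _ Hl).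
  - destruct (uf_split _ _ HU _ _ _ Hrest (fun j H => H)) as [Hr|Hid].
    + right; left. exact (limit_factorization U HU U_above _ _ _ _ Hr).
    + right; right.
      split; apply (restrict_limit_eq U HU U_above);
        apply (uf_mono _ HU _ _) with (2 := Hid); intros j [Hxu Hvy]; assumption.
Qed.

End Limit.

Theorem mainTheorem9 (V : sgd -> Prop) :
  pseudovariety V ->
  (pv_equidivisible V <->
   (forall A : graph, finite_vertex_graph A -> free_proV_equidivisible V A)).
Proof.
  intro HV. split.
  - intros HEq A _. apply free_proV_equidivisible_of_pv; assumption.
  - intros H A [HAv _]. apply H. exact HAv.
Qed.
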